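(* Let $(X,d)$ be a metric space and let $U\subseteq F_{USCG}(X)$. Then $U$ is totally bounded in $(F_{USCG}(X),H_{\rm end})$ if and only if $U(\alpha)=\bigcup_{u\in U}[u]_\alpha$ is totally bounded in $X$ for each $\alpha\in(0,1]$.
   Context: A fuzzy set on $X$ is a function $u:X\to[0,1]$, with $\alpha$-cuts $[u]_\alpha=\{x: u(x)\ge\alpha\}$ for $\alpha\in(0,1]$ and $[u]_0=\overline{\{u>0\}}$. $F_{USC}(X)$ is the set of fuzzy sets with all $\alpha$-cuts ($\alpha\in[0,1]$) non-empty and closed; $F_{USCG}(X)=\{u\in F_{USC}(X): [u]_\alpha\text{ compact for all }\alpha\in(0,1]\}$. $X\times[0,1]$ is metrized by $\overline{d}((x,\alpha),(y,\beta))=d(x,y)+|\alpha-\beta|$; ${\rm end}\,u=\{(x,t)\in X\times[0,1]: u(x)\ge t\}$; $H_{\rm end}(u,v)=H({\rm end}\,u,{\rm end}\,v)$ where $H$ is the Hausdorff distance $H(A,B)=\max\{\sup_{a\in A}\inf_{b\in B}\overline{d}(a,b),\sup_{b\in B}\inf_{a\in A}\overline{d}(a,b)\}$. *)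

From Stdlib Require List.
From mathcomp Require Import all_boot all_order all_algebra.
From mathcomp Require Import all_classical all_reals ereal.
Set Implicit Arguments. Unset Strict Implicit. Unset Printing Implicit Defensive.
Import Order.TTheory GRing.Theory Num.Theory.
Local Open Scope classical_set_scope.
Local Open Scope ring_scope.

Section Defs.
Variables (R : realType) (X : Type) (d : X -> X -> R).

Definition is_metric : Prop :=
  (forall x y, 0 <= d x y) /\ (forall x y, d x y = 0 <-> x = y) /\
  (forall x y, d x y = d y x) /\ (forall x y z, d x z <= d x y + d y z).

Definition open_ball (x : X) (e : R) : set X := [set y | d x y < e].

Definition d_open (O : set X) : Prop :=
  forall x, O x -> exists2 e, 0 < e & open_ball x e `<=` O.

Definition d_closure (A : set X) : set X :=
  [set x | forall e, 0 < e -> exists y, A y /\ d x y < e].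

Definition d_closed (A : set X) : Prop := d_closure A `<=` A.

Definition d_compact (A : set X) : Prop :=
  forall (I : Type) (O : I -> set X), (forall i, d_open (O i)) ->
    A `<=` \bigcup_(i in setT) O i ->
    exists s : seq I, A `<=` [set x | exists2 i, Stdlib.Lists.List.In i s & O i x].

Definition d_totally_bounded (A : set X) : Prop :=
  forall e, 0 < e -> exists s : seq X,
    A `<=` [set x | exists2 c, Stdlib.Lists.List.In c s & d c x < e].

Definition fuzzy (u : X -> R) : Prop := forall x, 0 <= u x <= 1.

Definition cut (u : X -> R) (a : R) : set X :=
  if a == 0 then d_closure [set x | 0 < u x] else [set x | a <= u x].

Definition F_USC : set (X -> R) :=
  [set u | fuzzy u /\ forall a, 0 <= a <= 1 ->
       cut u a !=set0 /\ d_closed (cut u a)].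

Definition F_USCG : set (X -> R) :=
  [set u | F_USC u /\ forall a, 0 < a <= 1 -> d_compact (cut u a)].

Definition dbar (p q : X * R) : R := d p.1 q.1 + `|p.2 - q.2|.

Definition endo (u : X -> R) : set (X * R) :=
  [set p | 0 <= p.2 <= 1 /\ p.2 <= u p.1].

Definition hausdorff (A B : set (X * R)) : \bar R :=
  Order.max
    (ereal_sup [set ereal_inf [set (dbar a b)%:E | b in B] | a in A])
    (ereal_sup [set ereal_inf [set (dbar a b)%:E | a in A] | b in B]).

Definition H_end (u v : X -> R) : \bar R := hausdorff (endo u) (endo v).

Definition Hend_totally_bounded (U : set (X -> R)) : Prop :=
  forall e, 0 < e -> exists s : seq (X -> R),
    (forall v, Stdlib.Lists.List.In v s -> F_USCG v) /\
    forall u, U u -> exists v, Stdlib.Lists.List.In v s /\ (H_end u v < e%:E)%E.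

Definition Ucut (U : set (X -> R)) (a : R) : set X :=
  \bigcup_(u in U) cut u a.
End Defs.

From mathcomp Require Import all_boot all_order all_algebra.
From mathcomp Require Import all_classical all_reals ereal.
From mathcomp Require Import lra.
Import Order.TTheory GRing.Theory Num.Theory.
Local Open Scope classical_set_scope.
Local Open Scope ring_scope.
Set Implicit Arguments. Unset Strict Implicit.

(* If finitely many v are H_end-close (radius r <= a/2) to every u in U, then
   each point (x, a) of end u lies within r of a point of some end v, whose
   height exceeds a/2; so U(a) is close to the finite union of the compact
   cuts [v]_(a/2), hence totally bounded.
   Conversely, take a finite eps-net S of U(1/M) with 1/M < eps, and replace u
   by the staircase supported on S whose value at a centre c is the largest
   level k/M that u reaches within eps of c.  It lies in F_USCG (all positive
   cuts are finite), is eps + 1/M close to u for H_end, and is determined by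
   finitely many levels, so these staircases form a finite net of U. *)

Section Metric.
Variables (R : realType) (X : Type) (d : X -> X -> R).
Hypothesis hd : is_metric d.

Lemma dist_ge0 x y : 0 <= d x y. Proof. by case: hd. Qed.
Lemma dist_xx x : d x x = 0. Proof. by case: hd => _ [/(_ x x) [_ ->]]. Qed.
Lemma dist_eq0 x y : d x y = 0 -> x = y.
Proof. by case: hd => _ [/(_ x y) []]. Qed.
Lemma distC x y : d x y = d y x. Proof. by case: hd => _ [_ []]. Qed.
Lemma dist_triangle x y z : d x z <= d x y + d y z.
Proof. by case: hd => _ [_ [_]]. Qed.

Lemma open_ball_open x e : d_open d (open_ball d x e).
Proof.
move=> y /= hy; exists (e - d x y); first by rewrite subr_gt0.
move=> z /= hz; apply: le_lt_trans (dist_triangle x y z) _.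
by rewrite -ltrBrDl.
Qed.

Lemma compact_totally_bounded A : d_compact d A -> d_totally_bounded d A.
Proof.
move=> cA e e0.
have [s hs] : exists s : seq X,
    A `<=` [set x | exists2 c, List.In c s & open_ball d c e x].
  apply: (cA X (open_ball d ^~ e)) => [c|x _]; first exact: open_ball_open.
  by exists x => //; rewrite /open_ball /= dist_xx.
by exists s => x /hs [c c1 c2]; exists c.
Qed.

Lemma totally_bounded_bigcup_seq (I : Type) (s : seq I) (A : I -> set X) :
  (forall i, List.In i s -> d_totally_bounded d (A i)) ->
  d_totally_bounded d [set x | exists2 i, List.In i s & A i x].
Proof.
elim: s => [_ e e0|i s IH tbA e e0]; first by exists [::] => x [].
have [s1 net1] := tbA i (or_introl erefl) e e0.
have [s2 net2] := IH (fun j js => tbA j (or_intror js)) e e0.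
exists (s1 ++ s2) => x [j [<-|js] Ajx].
  by have [c c1 c2] := net1 _ Ajx; exists c => //; apply: List.in_or_app; left.
have [c c1 c2] := net2 x (ex_intro2 _ _ j js Ajx).
by exists c => //; apply: List.in_or_app; right.
Qed.

Lemma subset_closure A : A `<=` d_closure d A.
Proof. by move=> x Ax e e0; exists x; rewrite dist_xx. Qed.

Lemma closure_closed A : d_closed d (d_closure d A).
Proof.
move=> x clx e e0.
have e20 : 0 < e / 2 by rewrite divr_gt0.
have [y [cly xy]] := clx _ e20.
have [z [Az yz]] := cly _ e20.
exists z; split => //; apply: le_lt_trans (dist_triangle x y z) _.
by rewrite [e]splitr ltrD.
Qed.

Lemma finite_dist_lbound (A : set X) x (L : seq X) :
  (forall c, List.In c L -> A c -> 0 < d x c) ->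
  exists2 e, 0 < e & forall c, List.In c L -> A c -> e <= d x c.
Proof.
elim: L => [_|a L IH pos]; first by exists 1.
have [e e0 le_e] := IH (fun c cL => pos c (or_intror cL)).
have [Aa|nAa] := pselect (A a); last first.
  by exists e => // c [<-|cL] Ac; [by [] | apply: le_e].
exists (Num.min e (d x a)); first by rewrite lt_min e0 pos //; left.
by move=> c [<-|cL] Ac; rewrite ge_min ?lexx ?orbT ?le_e.
Qed.

Lemma d_closed_finite (A : set X) (L : seq X) :
  A `<=` [set x | List.In x L] -> d_closed d A.
Proof.
move=> AL x clx; apply/not_notP => nAx.
have [e e0 le_e] :
    exists2 e, 0 < e & forall c, List.In c L -> A c -> e <= d x c.
  apply: finite_dist_lbound => c _ Ac; rewrite lt_neqAle dist_ge0 andbT.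
  by apply/eqP => /esym /dist_eq0 xc; apply: nAx; rewrite xc.
have [y [Ay xy]] := clx e e0.
by move: (le_e y (AL _ Ay) Ay); rewrite leNgt xy.
Qed.

Lemma d_compact_finite (A : set X) (L : seq X) :
  A `<=` [set x | List.In x L] -> d_compact d A.
Proof.
move=> AL I O _ cover.
suff [s hs] : exists s : seq I, forall c, List.In c L -> A c ->
    exists2 i, List.In i s & O i c.
  by exists s => x Ax; apply: hs => //; apply: AL.
elim: L {AL} => [|a L [s hs]]; first by exists [::].
have [Aa|nAa] := pselect (A a); last first.
  by exists s => c [<-|cL] Ac; [by [] | apply: hs].
have [i _ Oia] := cover a Aa.
exists (i :: s) => c [<-|cL] Ac; first by exists i => //; left.
by have [j j1 j2] := hs c cL Ac; exists j => //; right.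
Qed.

Lemma cutE (u : X -> R) a : a != 0 -> cut d u a = [set x | a <= u x].
Proof. by rewrite /cut => /negbTE ->. Qed.

Lemma F_USCG_finite_support (v : X -> R) (L : seq X) :
  fuzzy v -> (exists w, v w = 1) -> (forall x, 0 < v x -> List.In x L) ->
  F_USCG d v.
Proof.
move=> fv [w vw1] suppL.
have cutL a : 0 < a -> cut d v a `<=` [set x | List.In x L].
  by move=> a0 x; rewrite cutE ?gt_eqF //= => /(lt_le_trans a0) /suppL.
split; last by move=> a /andP[a0 _]; apply: d_compact_finite (cutL a a0).
split=> // a /andP[a0 a1]; have [->|an0] := eqVneq a 0.
  rewrite /cut eqxx; split; last exact: closure_closed.
  by exists w; apply: subset_closure; rewrite /= vw1.
have a_gt0 : 0 < a by rewrite lt_neqAle eq_sym an0.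
split; last exact: d_closed_finite (cutL a a_gt0).
by exists w; rewrite cutE //= vw1.
Qed.
End Metric.

Section Hausdorff.
Variables (R : realType) (X : Type) (d : X -> X -> R).
Local Open Scope ereal_scope.

Lemma hausdorff_lt_dbar (A B : set (X * R)) (r : R) p :
  hausdorff d A B < r%:E -> A p -> exists2 q, B q & (dbar d p q < r)%R.
Proof.
move=> hAB Ap.
have : ereal_inf [set (dbar d p q)%:E | q in B] < r%:E.
  apply: le_lt_trans hAB; rewrite le_max ereal_sup_ubound //.
  by exists p.
by move=> /ereal_inf_lt [_ [q Bq <-]]; rewrite lte_fin; exists q.
Qed.

Lemma hausdorff_le_dbar (A B : set (X * R)) (r : R) :
  (forall p, A p -> exists2 q, B q & (dbar d p q <= r)%R) ->
  (forall q, B q -> exists2 p, A p & (dbar d p q <= r)%R) ->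
  hausdorff d A B <= r%:E.
Proof.
move=> nearB nearA; rewrite ge_max; apply/andP; split.
  apply: ge_ereal_sup => _ [p Ap <-]; apply: ge_ereal_inf.
  by have [q Bq pq] := nearB p Ap; exists (dbar d p q)%:E => //; exists q.
apply: ge_ereal_sup => _ [q Bq <-]; apply: ge_ereal_inf.
by have [p Ap pq] := nearA q Bq; exists (dbar d p q)%:E => //; exists p.
Qed.
End Hausdorff.

Lemma Hend_totally_bounded_Ucut (R : realType) (X : Type) (d : X -> X -> R)
  (hd : is_metric d) (U : set (X -> R)) :
  Hend_totally_bounded d U ->
  forall a : R, 0 < a <= 1 -> d_totally_bounded d (Ucut d U a).
Proof.
move=> tbU a /andP[a0 a1] e e0.
have a20 : 0 < a / 2 by rewrite divr_gt0.
have e20 : 0 < e / 2 by rewrite divr_gt0.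
pose r := Num.min (a / 2) (e / 2).
have [s [s_USCG near_s]] := tbU r (ltac:(by rewrite lt_min a20 e20)).
have tb_cuts : d_totally_bounded d
    [set y | exists2 v, List.In v s & cut d v (a / 2) y].
  apply: totally_bounded_bigcup_seq => v vs.
  apply: compact_totally_bounded => //; apply: (s_USCG v vs).2.
  by rewrite a20 /= (le_trans _ a1) // ler_pdivrMr // ler_pMr // ler1n.
have [s' net'] := tb_cuts _ e20.
exists s' => x [u Uu]; rewrite cutE ?gt_eqF //= => ux.
have [v [vs Huv]] := near_s u Uu.
have [[y t] [_ tvy]] := hausdorff_lt_dbar Huv
  (ltac:(by rewrite /endo /= (ltW a0) a1) : endo u (x, a)).
rewrite /dbar /= => xy_at.
have r_a : r <= a / 2 by rewrite ge_min lexx.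
have r_e : r <= e / 2 by rewrite ge_min lexx orbT.
have [c cs' cy] : exists2 c, List.In c s' & d c y < e / 2.
  apply: net'; exists v => //; rewrite cutE ?gt_eqF //=.
  apply: le_trans tvy => /=.
  have := ler_norm (a - t); have := dist_ge0 hd x y; lra.
exists c => //; have := dist_triangle hd c y x; rewrite (distC hd y x).
have := normr_ge0 (a - t); lra.
Qed.

Lemma map_eq_In (T U : Type) (f g : T -> U) (s : seq T) x :
  map f s = map g s -> List.In x s -> f x = g x.
Proof. by elim: s => [|a s IH] //= [fga /IH fgs] [<-|/fgs]. Qed.

Lemma finite_image_code (Y Z : Type) (T : finType) (A : set Y) (g : Y -> Z)
    (code : Y -> T) :
  (forall y y', code y = code y' -> g y = g y') ->
  exists s : seq Z, (forall z, List.In z s -> exists2 y, A y & g y = z) /\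
                    (forall y, A y -> List.In (g y) s).
Proof.
move=> code_inj.
suff /(_ (enum T)) [s [s_img s_cover]] : forall l : seq T, exists s : seq Z,
    (forall z, List.In z s -> exists2 y, A y & g y = z) /\
    (forall y, A y -> code y \in l -> List.In (g y) s).
  by exists s; split => // y Ay; apply: s_cover; rewrite ?mem_enum.
elim=> [|t l [s [s_img s_cover]]]; first by exists [::].
have [[y0 [Ay0 cy0]]|no_t] := pselect (exists y, A y /\ code y = t); last first.
  exists s; split=> // y Ay; rewrite inE => /orP[/eqP cy|]; last exact: s_cover.
  by case: no_t; exists y.
exists (g y0 :: s); split=> [z [<-|/s_img //]|y Ay]; first by exists y0.
rewrite inE => /orP[/eqP cy|/(s_cover y Ay)]; last by right.
by left; apply: code_inj; rewrite cy0 cy.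
Qed.

Lemma exists_nat_inv_lt (R : realType) (e : R) :
  0 < e -> exists2 M : nat, (0 < M)%N & M%:R^-1 < e.
Proof.
move=> e0; exists (Num.truncn e^-1).+1 => //.
by rewrite invf_plt ?posrE ?ltr0n // truncnS_gt.
Qed.

Lemma grid_floor (R : realType) (M : nat) (t : R) : (0 < M)%N -> 0 <= t <= 1 ->
  exists2 k, (k <= M)%N & k%:R / M%:R <= t < k.+1%:R / M%:R.
Proof.
move=> M0 /andP[t0 t1]; have M0' : 0 < M%:R :> R by rewrite ltr0n.
have /andP[lo hi] := truncn_itv (mulr_ge0 t0 (ltW M0')).
exists (Num.truncn (t * M%:R)).
  by rewrite -(ler_nat R) (le_trans lo) // ler_piMl // ltW.
by rewrite ler_pdivrMr // ltr_pdivlMr // lo hi.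
Qed.

Section GridApproximation.
Variables (R : realType) (X : Type) (d : X -> X -> R).
Variables (S : seq X) (M : nat) (eps : R).
Hypotheses (hd : is_metric d) (M_gt0 : (0 < M)%N) (eps_gt0 : 0 < eps).

Definition level (u : X -> R) (c : X) : nat :=
  \max_(k < M.+1 | `[< exists2 y, k%:R / M%:R <= u y & d c y < eps >]) k.

Definition grid_approx (u : X -> R) (x : X) : R :=
  if `[< List.In x S >] then (level u x)%:R / M%:R else 0.

(* grid_approx u is determined by this finite datum (grid_code_inj). *)
Definition grid_code (u : X -> R) : (size S).-tuple 'I_M.+1 :=
  map_tuple (fun c => inord (level u c)) (in_tuple S).

Definition grid_net (u : X -> R) : Prop :=
  forall x, M%:R^-1 <= u x -> exists2 c, List.In c S & d c x < eps.

Let M_pos : 0 < M%:R :> R. Proof. by rewrite ltr0n. Qed.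

Lemma level_le u c : (level u c <= M)%N.
Proof. by apply/bigmax_leqP => k _; rewrite -ltnS. Qed.

Lemma level_ge u c k y : (k <= M)%N -> k%:R / M%:R <= u y -> d c y < eps ->
  (k <= level u c)%N.
Proof.
rewrite -ltnS => kM uy cy.
by apply: (leq_bigmax_cond (Ordinal kM)); apply/asboolP; exists y.
Qed.

Lemma level_witness u c : (0 < level u c)%N ->
  exists2 y, (level u c)%:R / M%:R <= u y & d c y < eps.
Proof.
rewrite /level.
have [[k0 Pk0]|noP] := pselect (exists k : 'I_M.+1,
  `[< exists2 y, k%:R / M%:R <= u y & d c y < eps >]); last first.
  by rewrite big_pred0 // => k; apply/negP => Pk; apply: noP; exists k.
by rewrite (bigop.bigmax_eq_arg k0 Pk0); case: arg_maxnP => // k /asboolP.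
Qed.

Lemma grid_approxE u x :
  List.In x S -> grid_approx u x = (level u x)%:R / M%:R.
Proof. by move=> xS; rewrite /grid_approx asboolT. Qed.

Lemma grid_approx_supp u x : 0 < grid_approx u x -> List.In x S.
Proof. by rewrite /grid_approx; case: asboolP => // _; rewrite ltxx. Qed.

Lemma grid_approx_fuzzy u : fuzzy (grid_approx u).
Proof.
move=> x; rewrite /grid_approx; case: asboolP => _; last by rewrite lexx ler01.
by rewrite divr_ge0 //= ler_pdivrMr // mul1r ler_nat level_le.
Qed.

Lemma grid_code_inj u u' :
  grid_code u = grid_code u' -> grid_approx u = grid_approx u'.
Proof.
move=> /(congr1 val) /= codes; apply: funext => x; rewrite /grid_approx.
case: asboolP => // xS; congr (_%:R / _).
have := congr1 val (map_eq_In codes xS).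
by rewrite /= !inordK // ltnS level_le.
Qed.

Lemma endo_near_grid_approx u : fuzzy u -> grid_net u ->
  forall p, endo u p ->
  exists2 q, endo (grid_approx u) q & dbar d p q <= eps + M%:R^-1.
Proof.
move=> fu netS [x t]; rewrite /endo /= => -[t01 tux].
have [k kM /andP[kt tk]] := grid_floor M_gt0 t01.
have [k0|k_gt0] := posnP k.
  exists (x, 0).
    by rewrite /endo /= lexx ler01; case/andP: (grid_approx_fuzzy u x).
  move: tk; rewrite /dbar /= dist_xx // subr0 k0 mul1r.
  rewrite ger0_norm ?(andP t01).1 //.
  have := eps_gt0; lra.
have k_ge1 : M%:R^-1 <= k%:R / M%:R :> R.
  by rewrite ler_pdivlMr // mulVf ?gt_eqF // ler1n.
have [c cS cx] := netS x (le_trans k_ge1 (le_trans kt tux)).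
have kc := level_ge kM (le_trans kt tux) cx.
exists (c, k%:R / M%:R).
  rewrite /endo /= grid_approxE // ler_pdivrMr // mul1r ler_nat kM.
  by rewrite divr_ge0 // ler_pM2r ?invr_gt0 // ler_nat kc.
rewrite /dbar /= (distC hd x c) ger0_norm ?subr_ge0 //.
move: tk; rewrite -natr1 mulrDl mul1r; set q := k%:R / M%:R; lra.
Qed.

Lemma grid_approx_near_endo u : fuzzy u ->
  forall q, endo (grid_approx u) q -> exists2 p, endo u p & dbar d p q <= eps.
Proof.
move=> fu [y s]; rewrite /endo /= => -[/andP[s0 s1] svy].
move: s0; rewrite le0r => /orP[/eqP s0|s_gt0].
  exists (y, 0); first by rewrite /endo /= lexx ler01; case/andP: (fu y).
  by rewrite /dbar /= dist_xx // s0 subrr normr0 addr0 ltW.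
have yS := grid_approx_supp (lt_le_trans s_gt0 svy).
move: svy; rewrite grid_approxE // => svy.
have [|z zu yz] := level_witness (u := u) (c := y).
  rewrite lt0n; apply: contraTneq (lt_le_trans s_gt0 svy) => ->.
  by rewrite mul0r ltxx.
exists (z, s); first by rewrite /endo /= (ltW s_gt0) s1 (le_trans svy zu).
by rewrite /dbar /= subrr normr0 addr0 distC // ltW.
Qed.

Lemma H_end_grid_approx u : fuzzy u -> grid_net u ->
  (H_end d u (grid_approx u) <= (eps + M%:R^-1)%:E)%E.
Proof.
move=> fu netS; apply: hausdorff_le_dbar; first exact: endo_near_grid_approx.
move=> q /(grid_approx_near_endo fu) [p up pq]; exists p => //.
by rewrite (le_trans pq) // lerDl invr_ge0 ltW.
Qed.

Lemma grid_approx_F_USCG u :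
  F_USC d u -> grid_net u -> F_USCG d (grid_approx u).
Proof.
move=> [_ cuts] netS; apply: (F_USCG_finite_support hd (L := S)).
- exact: grid_approx_fuzzy.
- have [[x1]] := cuts 1 (ltac:(by rewrite ler01 lexx)).
  rewrite cutE ?oner_neq0 //= => ux1 _.
  have iM_le1 : M%:R^-1 <= 1 :> R by rewrite invf_le1 // ler1n.
  have [c cS cx1] := netS x1 (le_trans iM_le1 ux1).
  exists c; rewrite grid_approxE //.
  have -> : level u c = M.
    by apply/eqP; rewrite eqn_leq level_le (level_ge _ _ cx1) // divff ?gt_eqF.
  by rewrite divff ?gt_eqF.
- exact: grid_approx_supp.
Qed.
End GridApproximation.

Lemma Ucut_totally_bounded_Hend (R : realType) (X : Type) (d : X -> X -> R)
  (hd : is_metric d) (U : set (X -> R)) (hU : U `<=` F_USCG d) :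
  (forall a : R, 0 < a <= 1 -> d_totally_bounded d (Ucut d U a)) ->
  Hend_totally_bounded d U.
Proof.
move=> tbU e e0.
have e20 : 0 < e / 2 by rewrite divr_gt0.
have [M M_gt0 Me] := exists_nat_inv_lt e20.
have iM_gt0 : 0 < M%:R^-1 :> R by rewrite invr_gt0 ltr0n.
have iM_le1 : M%:R^-1 <= 1 :> R by rewrite invf_le1 ?ltr0n ?ler1n.
have [S netS] := tbU M%:R^-1 (ltac:(by rewrite iM_gt0 iM_le1)) _ e20.
have netU u : U u -> grid_net d S M (e / 2) u.
  by move=> Uu x ux; apply: netS; exists u => //; rewrite cutE ?gt_eqF.
have [s [s_img U_s]] :=
  finite_image_code U (fun u u' => @grid_code_inj _ _ d S M (e / 2) u u').
exists s; split=> [_ /s_img [u Uu <-]|u Uu].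
  exact: grid_approx_F_USCG (hU u Uu).1 (netU u Uu).
exists (grid_approx d S M (e / 2) u); split; first exact: U_s.
apply: le_lt_trans (H_end_grid_approx hd M_gt0 e20 (hU u Uu).1.1 (netU u Uu)) _.
by rewrite lte_fin; lra.
Qed.

Unset Implicit Arguments.
Theorem theorem5p8 (R : realType) (X : Type) (d : X -> X -> R)
  (hd : is_metric d) (U : set (X -> R)) (hU : U `<=` F_USCG d) :
  Hend_totally_bounded d U <->
  (forall a : R, 0 < a <= 1 -> d_totally_bounded d (Ucut d U a)).
Proof.
split; [exact: Hend_totally_bounded_Ucut | exact: Ucut_totally_bounded_Hend].
Qed.
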